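(* Let $G=(V,E,w)$, $s$, $\tau$ (with $|\tau|\ge 2$) and a budget $b\ge 0$ be as in the context, and suppose that at least one feasible subgraph exists. Then \[ \max_{\substack{S\subseteq G \text{ feasible}}} \textsc{CD}_{\tau,s}(S) \;=\; \max_{\substack{S\in\mathcal{S}(\tau,s)\\ w(S)\le b}} \textsc{CD}_{\tau,s}(S), \] and in particular there is an optimal solution $S^\star\in\mathcal{S}(\tau,s)$ with $w(S^\star)\le b$.
   Context: Let $G=(V,E,w)$ be a finite directed graph with non-negative edge weights $w:E\to\mathbb{R}_{\ge 0}$. A path from $u$ to $v$ in a subgraph $S\subseteq G$ is a sequence $u=v_0\to v_1\to\cdots\to v_k=v$ ($k\ge 0$) with each $v_i\to v_{i+1}$ an edge of $S$; for $i\le j$, $w_P(v_i,v_j)=\sum_{m=i}^{j-1} w(v_m\to v_{m+1})$. A vertex $y$ is reachable from $x$ in $S$ if there is a path from $x$ to $y$ in $S$ (a vertex is reachable from itself). Fix a start vertex $s\in V$ and a finite target set $\tau\subseteq V\setminus\{s\}$ with $|\tau|\ge 2$. The cost of a subgraph $S$ is $w(S)=\sum_{e\in E(S)} w(e)$. For a subgraph $S$ containing $s$ and $\tau$ in which every target is reachable from $s$: for a path $P=v_0\to\cdots\to v_k$ in $S$ with $v_0=s$, $v_k=t\in\tau$, let $\ell$ be the largest index such that some target in $\tau\setminus\{t\}$ is reachable from $v_\ell$ in $S$; the last deceptive point is $l(P,t)=v_\ell$. The unique distance of $t\in\tau$ is $\textsc{U}_S(t)=\min\{w_P(l(P,t),t):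 P \text{ a path in } S \text{ from } s \text{ to } t\}$, and the counterdeceptiveness of $S$ is $\textsc{CD}_{\tau,s}(S)=\min_{t\in\tau}\textsc{U}_S(t)$. Given a budget $b\ge 0$, a subgraph $S\subseteq G$ is feasible if $s\in V(S)$, $\tau\subseteq V(S)$, every target is reachable from $s$ in $S$, and $w(S)\le b$. $\mathcal{S}(\tau,s)$ denotes the set of Steiner trees in $G$ rooted at $s$ with leaves in $\tau$: subgraphs $S\subseteq G$ that are out-arborescences rooted at $s$ (underlying undirected graph a tree, $s$ of in-degree $0$, every other vertex of in-degree $1$), with $\tau\subseteq V(S)$, and such that every leaf (vertex other than $s$ of out-degree $0$) belongs to $\tau$. *)

From HB Require Import structures.
From mathcomp Require Import all_boot all_order all_algebra.
From mathcomp Require Import classical_sets reals.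
Set Implicit Arguments. Unset Strict Implicit. Unset Printing Implicit Defensive.
Import Order.TTheory GRing.Theory Num.Theory.
Local Open Scope ring_scope.
Local Open Scope classical_set_scope.

(* A directed graph G = (V, E, w): V a finite type, E : {set V * V} the set of
   directed edges (u, v) meaning u -> v, and w : V * V -> R (only its values on E
   matter; non-negativity on E is a hypothesis of the theorem). *)
Section Defs.
Variables (R : realType) (V : finType).

Definition subg := ({set V} * {set (V * V)})%type.

Definition is_subgraph (E : {set V * V}) (S : subg) : bool :=
  (S.2 \subset E) && [forall e in S.2, (e.1 \in S.1) && (e.2 \in S.1)].

Definition edgeS (S : subg) : rel V := fun x y => (x, y) \in S.2.

Definition reach (S : subg) (x y : V) : bool := connect (edgeS S) x y.

Definition cost (w : V * V -> R) (S : subg) : R := \sum_(e in S.2) w e.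

Fixpoint walkw (w : V * V -> R) (p : seq V) : R :=
  match p with
  | x :: ((y :: _) as q) => w (x, y) + walkw w q
  | _ => 0
  end.

(* Paths from s to t in S are lists P = s :: xs with path (edgeS S) s xs and
   last s xs = t. *)
Definition ldp_index (S : subg) (tau : {set V}) (s t : V) (P : seq V) : nat :=
  \max_(i < size P | [exists t' in tau, (t' != t) && reach S (nth s P i) t']) i.

Definition deceptive_suffix_weight (w : V * V -> R) (S : subg) (tau : {set V})
    (s t : V) (P : seq V) : R :=
  walkw w (drop (ldp_index S tau s t P) P).

Definition unique_dist (w : V * V -> R) (S : subg) (tau : {set V}) (s t : V) : R :=
  inf [set deceptive_suffix_weight w S tau s t (s :: xs) |
        xs in [set xs : seq V | path (edgeS S) s xs && (last s xs == t)]].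

Definition CD (w : V * V -> R) (tau : {set V}) (s : V) (S : subg) : R :=
  inf [set unique_dist w S tau s t | t in [set t : V | t \in tau]].

Definition feasible (E : {set V * V}) (w : V * V -> R) (s : V) (tau : {set V})
    (b : R) (S : subg) : Prop :=
  [/\ is_subgraph E S, s \in S.1, tau \subset S.1,
      (forall t, t \in tau -> reach S s t) & cost w S <= b].

Definition uedge (S : subg) : rel V := fun x y => ((x, y) \in S.2) || ((y, x) \in S.2).

Definition uconnected (S : subg) : Prop :=
  forall x y, x \in S.1 -> y \in S.1 -> connect (uedge S) x y.

(* a cycle in the underlying undirected (multi)graph: distinct vertices
   u_0..u_{k-1} (k >= 1), distinct edges e_0..e_{k-1} of S, e_i joining
   u_i and u_{(i+1) mod k} in either orientation *)
Definition ucycle (S : subg) (vs : seq V) (es : seq (V * V)) : bool :=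
  match vs with
  | [::] => false
  | v0 :: _ =>
    [&& size es == size vs, uniq vs, uniq es,
        all (fun e => e \in S.2) es &
        all (fun i => let a := nth v0 vs i in
                      let c := nth v0 vs ((i + 1) %% size vs) in
                      let e := nth (a, c) es i in
                      (e == (a, c)) || (e == (c, a))) (iota 0 (size vs))]
  end.

Definition uacyclic (S : subg) : Prop := forall vs es, ~~ ucycle S vs es.

Definition indeg (S : subg) (v : V) : nat := #|[set e in S.2 | e.2 == v]|.
Definition outdeg (S : subg) (v : V) : nat := #|[set e in S.2 | e.1 == v]|.

(* S in the set of Steiner trees S(tau, s): an out-arborescence of G rooted at s
   (subgraph whose underlying undirected graph is a tree, s has in-degree 0, every
   other vertex in-degree 1) containing tau, all of whose leaves
   (vertices other than s of out-degree 0) are in tau. *)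
Definition steiner_tree (E : {set V * V}) (s : V) (tau : {set V}) (S : subg) : Prop :=
  [/\ is_subgraph E S, s \in S.1, uconnected S & uacyclic S] /\
  [/\ indeg S s = 0%N,
      (forall v, v \in S.1 -> v != s -> indeg S v = 1%N),
      tau \subset S.1 &
      (forall v, v \in S.1 -> v != s -> outdeg S v = 0%N -> v \in tau)].

End Defs.

From Pilot Require Import Defs.
From HB Require Import structures.
From mathcomp Require Import all_boot all_order all_algebra.
From mathcomp Require Import boolp classical_sets reals.
Set Implicit Arguments. Unset Strict Implicit. Unset Printing Implicit Defensive.
Import Order.TTheory GRing.Theory Num.Theory.
Local Open Scope ring_scope.
Local Open Scope classical_set_scope.

(* Deleting edges can only increase counterdeceptiveness, as long as every target
   stays reachable from s: each s-t path survives in the larger graph, and there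
   more targets are reachable from each of its vertices, so its last deceptive point
   can only move later and, the weights being nonnegative, the remaining suffix
   only gets lighter.  Deleting edges also lowers the cost.  Every feasible
   subgraph contains a Steiner tree that keeps the targets reachable: take a
   shortest-path tree from s (parents chosen at strictly smaller distance, so it is
   acyclic with in-degree one) and keep only the vertices from which a target is
   reachable in it, so that every leaf is a target.  Hence an optimum over the
   finitely many feasible subgraphs can be replaced by a Steiner tree that is at
   least as good, and conversely every Steiner tree within budget is feasible since
   every vertex of an arborescence is reachable from its root. *)

Local Notation fsubsetP := fintype.subsetP.

Section WalkWeights.
Variables (R : realType) (V : finType) (w : V * V -> R) (r : rel V).
Hypothesis w_ge0 : forall a b, r a b -> 0 <= w (a, b).

Lemma walkw_drop_ge0 x p n : path r x p -> 0 <= walkw w (drop n (x :: p)).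
Proof.
elim: p x n => [|y p IH] x n /=; first by case: n.
move=> /andP[rxy yp]; case: n => [|n]; last exact: IH.
by rewrite drop0 /= addr_ge0 ?w_ge0 // (IH y 0%N yp).
Qed.

Lemma walkw_dropS_le x p n :
  path r x p -> walkw w (drop n.+1 (x :: p)) <= walkw w (drop n (x :: p)).
Proof.
elim: p x n => [|y p IH] x n /=; first by case: n.
move=> /andP[rxy yp]; case: n => [|n]; last exact: IH.
by rewrite drop0 /= lerDr w_ge0.
Qed.

Lemma walkw_drop_le x p i j : path r x p -> (j <= i)%N ->
  walkw w (drop i (x :: p)) <= walkw w (drop j (x :: p)).
Proof.
move=> xp /subnK <-; elim: (i - j)%N => [|k IH] //.
by rewrite addSn (le_trans (walkw_dropS_le _ xp)).
Qed.

End WalkWeights.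

Lemma reach_subgraph (V : finType) (S T : subg V) x y :
  T.2 \subset S.2 -> reach T x y -> reach S x y.
Proof.
by move=> TS; apply: connect_sub => a b ab; apply/connect1/(fsubsetP TS).
Qed.

Section SubgraphMonotonicity.
Variables (R : realType) (V : finType) (w : V * V -> R) (tau : {set V}) (s : V).
Variables (S T : subg V).
Hypotheses (w_ge0 : {in S.2, forall e, 0 <= w e}) (TS : T.2 \subset S.2).

Lemma ldp_index_subgraph t P : (ldp_index T tau s t P <= ldp_index S tau s t P)%N.
Proof.
apply/bigmax_leqP => i /existsP[t' /and3P[t'_tau t'_neq reach_t']].
apply: leq_bigmax_cond; apply/existsP; exists t'.
by rewrite t'_tau t'_neq (reach_subgraph TS).
Qed.

Lemma deceptive_suffix_weight_ge0 t xs : path (edgeS S) s xs ->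
  0 <= deceptive_suffix_weight w S tau s t (s :: xs).
Proof. by apply: walkw_drop_ge0 => a b; apply: w_ge0. Qed.

Lemma unique_dist_ge0 t : reach S s t -> 0 <= unique_dist w S tau s t.
Proof.
case/connectP => p sp tp; apply: lb_le_inf.
  by exists (deceptive_suffix_weight w S tau s t (s :: p)); exists p; rewrite //= sp tp eqxx.
by move=> _ [xs /andP[sxs _] <-]; apply: deceptive_suffix_weight_ge0.
Qed.

Lemma unique_dist_subgraph t :
  reach T s t -> unique_dist w S tau s t <= unique_dist w T tau s t.
Proof.
case/connectP => p sp tp; apply: lb_le_inf.
  by exists (deceptive_suffix_weight w T tau s t (s :: p)); exists p; rewrite //= sp tp eqxx.
move=> _ [xs /andP[sxs /eqP txs] <-].
have sxs_S : path (edgeS S) s xs by apply: sub_path sxs => a b /(fsubsetP TS).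
apply: le_trans (ge_inf _ _) _.
- exists 0 => _ [ys /andP[sys _] <-]; exact: deceptive_suffix_weight_ge0.
- by exists xs; rewrite //= sxs_S txs eqxx.
apply: walkw_drop_le sxs_S (ldp_index_subgraph _ _) => a b; exact: w_ge0.
Qed.

Lemma CD_subgraph : (exists t, t \in tau) -> {in tau, forall t, reach T s t} ->
  CD w tau s S <= CD w tau s T.
Proof.
move=> [t0 t0_tau] reach_T; apply: lb_le_inf.
  by exists (unique_dist w T tau s t0); exists t0.
move=> _ [t t_tau <-]; apply: le_trans (ge_inf _ _) (unique_dist_subgraph (reach_T t t_tau)).
- exists 0 => _ [t' t'_tau <-].
  exact/unique_dist_ge0/(reach_subgraph TS)/reach_T.
- by exists t.
Qed.

End SubgraphMonotonicity.

Lemma iter_cycle (T : finType) (f : T -> T) x : exists i k,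
  [/\ (0 < k)%N, iter k f (iter i f x) = iter i f x & uniq (traject f (iter i f x) k)].
Proof.
have looping_card : looping f x #|T|.
  apply/negPn; rewrite -looping_uniq; apply/negP => /card_uniqP.
  rewrite size_traject => card_traject.
  by have := max_card (mem (traject f x #|T|.+1)); rewrite card_traject ltnn.
case: (ex_minnP (ex_intro (looping f x) _ looping_card)) => -[//|n] loop_n min_n.
have uniq_n : uniq (traject f x n.+1).
  by rewrite looping_uniq; apply/negP => /min_n; rewrite ltnn.
case/trajectP: loop_n => i lt_in eq_i.
set k := (n.+1 - i)%N; have def_n : n.+1 = (i + k)%N by rewrite subnKC // ltnW.
exists i, k; split; first by rewrite subn_gt0.
  by rewrite -iterD addnC -def_n.
by move: uniq_n; rewrite def_n trajectD cat_uniq => /and3P[].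
Qed.

Section Arborescence.
Variables (V : finType) (S : subg V) (s : V).

Lemma ucycle_traject (p : V -> V) y k : (0 < k)%N -> iter k p y = y ->
  uniq (traject p y k) ->
  (forall m, (m < k)%N -> (p (iter m p y), iter m p y) \in S.2) ->
  Defs.ucycle S (traject p y k) [seq (p x, x) | x <- traject p y k].
Proof.
case: k => // k _ cyc uniq_cyc edges.
have p_mod m : (m < k.+1)%N -> p (iter m p y) = iter ((m + 1) %% k.+1) p y.
  move=> lt_mk; rewrite addn1 -iterS; case: (ltnP m.+1 k.+1) => [lt_m1k|le_km1].
    by rewrite modn_small.
  have -> : m.+1 = k.+1 by apply/eqP; rewrite eqn_leq le_km1 lt_mk.
  by rewrite modnn cyc.
rewrite /Defs.ucycle; change (y :: traject p (p y) k) with (traject p y k.+1).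
apply/and5P; split.
- by rewrite size_map.
- exact: uniq_cyc.
- by rewrite map_inj_uniq // => a b [].
- by apply/allP => e /mapP[x /trajectP[m lt_mk ->] ->]; apply: edges.
apply/allP => m; rewrite mem_iota size_traject add0n => /andP[_ lt_mk].
by rewrite (nth_map y) ?size_traject // !nth_traject ?ltn_pmod // p_mod // eqxx orbT.
Qed.

Hypotheses (S_tail : forall u v, (u, v) \in S.2 -> u \in S.1)
  (indeg_root : indeg S s = 0%N)
  (indeg_nonroot : {in S.1, forall v, v != s -> indeg S v = 1%N})
  (S_acyclic : uacyclic S).

Definition parent v := odflt v [pick u | (u, v) \in S.2].

Lemma parent_root : parent s = s.
Proof.
rewrite /parent; case: pickP => // u us; move/eqP: indeg_root.
by rewrite cards_eq0 => /eqP/setP/(_ (u, s)); rewrite !inE us eqxx.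
Qed.

Lemma parent_edge v : v \in S.1 -> v != s -> (parent v, v) \in S.2.
Proof.
move=> vS v_neq_s; have /eqP/cards1P[e in_v] := indeg_nonroot vS v_neq_s.
have /[!inE] /andP[eS /eqP e2] : e \in [set e0 in S.2 | e0.2 == v] by rewrite in_v set11.
rewrite /parent; case: pickP => [//|none].
by move: (none e.1); rewrite -e2 -surjective_pairing eS.
Qed.

Lemma iter_parent_reach m v : v \in S.1 ->
  (iter m parent v \in S.1) && reach S (iter m parent v) v.
Proof.
move=> vS; elim: m => [|m /andP[uS reach_u]] /=; first by rewrite vS; apply: connect0.
set u := iter m parent v in uS reach_u *.
have [u_root|u_neq_s] := eqVneq u s; first by rewrite u_root parent_root -u_root uS.
have pu_u := parent_edge uS u_neq_s.
by rewrite (S_tail pu_u); apply: connect_trans (connect1 pu_u) reach_u.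
Qed.

Lemma arborescence_reach v : v \in S.1 -> reach S s v.
Proof.
move=> vS; have [i [k [k_gt0 cyc uniq_cyc]]] := iter_cycle parent v.
have [/existsP[m /eqP <-]|] := boolP [exists m : 'I_k, iter (m + i) parent v == s].
  by have /andP[] := iter_parent_reach (m + i) vS.
rewrite negb_exists => /forallP not_root.
have := S_acyclic (traject parent (iter i parent v) k)
  [seq (parent x, x) | x <- traject parent (iter i parent v) k].
rewrite ucycle_traject // => m lt_mk; rewrite -iterD.
by apply: parent_edge; [case/andP: (iter_parent_reach (m + i) vS)|apply: not_root (Ordinal lt_mk)].
Qed.

End Arborescence.

Lemma steiner_tree_reach (V : finType) (E : {set V * V}) s tau (S : subg V) :
  steiner_tree E s tau S -> {in S.1, forall v, reach S s v}.
Proof.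
case=> -[/andP[_ /forallP ends] _ _ acyclic] [indeg_s indeg_v _ _].
apply: arborescence_reach indeg_s _ acyclic => [u v uv|v vS].
  by have /implyP/(_ uv)/andP[] := ends (u, v).
exact: indeg_v.
Qed.

(* At a vertex of maximal potential on a cycle both incident cycle edges point
   into it, so unique in-edges force them to coincide, i.e. a cycle of length one:
   a loop, which the strict increase of the potential forbids. *)
Lemma uacyclic_potential (V : finType) (S : subg V) (d : V -> nat) :
  (forall e, e \in S.2 -> (d e.1 < d e.2)%N) ->
  (forall u u' v, (u, v) \in S.2 -> (u', v) \in S.2 -> u = u') -> uacyclic S.
Proof.
move=> d_lt head_uniq [|v0 vs'] es //; apply/negP.
set vs := v0 :: vs'; rewrite /Defs.ucycle -/vs.
case/and5P=> /eqP size_es _ uniq_es /allP es_S /allP es_join.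
set k := size vs; have k_gt0 : (0 < k)%N by [].
pose nxt m := ((m + 1) %% k)%N.
have edge_at m : (m < k)%N -> nth (v0, v0) es m \in S.2 /\
    (nth (v0, v0) es m == (nth v0 vs m, nth v0 vs (nxt m))) ||
    (nth (v0, v0) es m == (nth v0 vs (nxt m), nth v0 vs m)).
  move=> lt_mk; split; first by apply/es_S/mem_nth; rewrite size_es.
  have := es_join m; rewrite mem_iota add0n => /(_ lt_mk).
  by rewrite (set_nth_default (v0, v0)) // size_es.
have oriented e a c : e \in S.2 -> (e == (a, c)) || (e == (c, a)) ->
    (d a <= d c)%N -> e = (a, c).
  move=> eS /orP[/eqP //|/eqP e_ca] le_ac.
  by have := d_lt e eS; rewrite e_ca /= ltnNge le_ac.
have [i _ i_max] :=
  @arg_maxnP _ (Ordinal k_gt0) xpredT (fun j : 'I_k => d (nth v0 vs j)) isT.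
set v := nth v0 vs i.
have d_max m : (m < k)%N -> (d (nth v0 vs m) <= d v)%N.
  by move=> lt_mk; apply: (i_max (Ordinal lt_mk)).
set j := ((i + k.-1) %% k)%N.
have lt_jk : (j < k)%N by rewrite ltn_pmod.
have nxt_j : nxt j = i.
  by rewrite /nxt /j modnDml -addnA addn1 prednK // modnDr modn_small.
have [eiS ei_join] := edge_at i (ltn_ord i).
have [ejS ej_join] := edge_at j lt_jk.
have e_i : nth (v0, v0) es i = (nth v0 vs (nxt i), v).
  by apply: oriented => //; [rewrite orbC | apply/d_max/ltn_pmod].
have e_j : nth (v0, v0) es j = (nth v0 vs j, v).
  rewrite -[v]/(nth v0 vs i) -nxt_j.
  by apply: oriented => //; rewrite nxt_j; apply: d_max lt_jk.
have tails_eq : nth v0 vs (nxt i) = nth v0 vs j.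
  by apply: (head_uniq _ _ v); rewrite -?e_i -?e_j.
have /eqP : nth (v0, v0) es i = nth (v0, v0) es j by rewrite e_i e_j tails_eq.
rewrite nth_uniq ?size_es // => /eqP i_j.
have nxt_i : nxt i = i by rewrite {1}i_j nxt_j.
by have := d_lt _ eiS; rewrite e_i /= nxt_i ltnn.
Qed.

Section PrunedShortestPathTree.
Variables (V : finType) (S : subg V) (s : V) (tau : {set V}).
Hypotheses (reach_tau : {in tau, forall t, reach S s t}) (tau_neq0 : exists t, t \in tau).

Definition walk_of_size n v :=
  [exists q : n.-tuple V, path (edgeS S) s q && (last s q == v)].

Lemma exists_walk_of_size v : exists n, walk_of_size n v || ~~ reach S s v.
Proof.
have [/connectP[q sq vq]|] := boolP (reach S s v); last by exists 0%N; rewrite orbC.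
by exists (size q); apply/orP; left; apply/existsP; exists (in_tuple q); rewrite /= sq vq eqxx.
Qed.

(* The length of a shortest walk from s; junk value 0 when v is unreachable. *)
Definition bfs_dist v := ex_minn (exists_walk_of_size v).

Lemma bfs_dist_min v n : walk_of_size n v -> (bfs_dist v <= n)%N.
Proof. by rewrite /bfs_dist; case: ex_minnP => m _ min_m walk_n; apply: min_m; rewrite walk_n. Qed.

Lemma bfs_dist_walk v : reach S s v -> walk_of_size (bfs_dist v) v.
Proof. by rewrite /bfs_dist; case: ex_minnP => m /orP[//|/negP not_reach _ /not_reach]. Qed.

Lemma bfs_predecessor v : reach S s v -> v != s ->
  exists u, [&& (u, v) \in S.2, reach S s u & (bfs_dist u < bfs_dist v)%N].
Proof.
move=> reach_v v_neq_s; case/existsP: (bfs_dist_walk reach_v).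
case=> q /= /eqP size_q /andP[]; case/lastP: q size_q => [|q x] size_q /=.
  by move=> _ /eqP s_v; rewrite s_v eqxx in v_neq_s.
rewrite rcons_path last_rcons => /andP[sq edge_x] /eqP x_v; subst x.
exists (last s q); apply/and3P; split=> //; first by apply/connectP; exists q.
rewrite -size_q size_rcons ltnS; apply: bfs_dist_min.
by apply/existsP; exists (in_tuple q); rewrite /= sq eqxx.
Qed.

Definition bfs_parent v :=
  [pick u | [&& (u, v) \in S.2, reach S s u & (bfs_dist u < bfs_dist v)%N]].

Definition bfs_edges : {set V * V} :=
  [set e | [&& e.2 != s, reach S s e.2 & bfs_parent e.2 == Some e.1]].

Definition bfs_tree : subg V := ([set: V]%SET, bfs_edges).

Definition pruned_vertices : {set V} :=
  [set v | reach S s v && [exists t in tau, reach bfs_tree v t]].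

Definition pruned_tree : subg V :=
  (pruned_vertices, [set e in bfs_edges | e.2 \in pruned_vertices]).

Lemma bfs_edgeP e : e \in bfs_edges ->
  [/\ e \in S.2, reach S s e.1, reach S s e.2 & (bfs_dist e.1 < bfs_dist e.2)%N].
Proof.
rewrite inE => /and3P[_ reach_e2 /eqP]; rewrite /bfs_parent.
case: pickP => // u /and3P[uv reach_u lt_uv] [e1_u].
by rewrite -e1_u [e]surjective_pairing /= -e1_u.
Qed.

Lemma bfs_parent_edge v : reach S s v -> v != s -> exists u, (u, v) \in bfs_edges.
Proof.
move=> reach_v v_neq_s; have [u0 pred_u0] := bfs_predecessor reach_v v_neq_s.
case def_p: (bfs_parent v) => [u|]; first by exists u; rewrite inE /= v_neq_s reach_v def_p eqxx.
by move: def_p; rewrite /bfs_parent; case: pickP => // none; rewrite none in pred_u0.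
Qed.

Lemma bfs_edges_head u u' v : (u, v) \in bfs_edges -> (u', v) \in bfs_edges -> u = u'.
Proof. by rewrite !inE /= => /and3P[_ _ /eqP ->] /and3P[_ _ /eqP []]. Qed.

Lemma reach_by_bfs_dist (T : subg V) (X : {pred V}) :
  {in X, forall v, v != s ->
     exists2 u, (u, v) \in T.2 & (u \in X) && (bfs_dist u < bfs_dist v)%N} ->
  {in X, forall v, reach T s v}.
Proof.
move=> pred_X v; have [n] := ubnP (bfs_dist v); elim: n v => // n IH v.
rewrite ltnS => le_vn Xv; have [->|v_neq_s] := eqVneq v s; first exact: connect0.
have [u uv /andP[Xu lt_uv]] := pred_X v Xv v_neq_s.
exact: connect_trans (IH u (leq_trans lt_uv le_vn) Xu) (connect1 uv).
Qed.

Lemma bfs_tree_reach : {in reach S s, forall v, reach bfs_tree s v}.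
Proof.
apply: reach_by_bfs_dist => v reach_v v_neq_s.
have [u uv] := bfs_parent_edge reach_v v_neq_s.
by have [_ reach_u _ lt_uv] := bfs_edgeP uv; exists u => //; apply/andP.
Qed.

Lemma root_pruned : s \in pruned_vertices.
Proof.
have [t t_tau] := tau_neq0; rewrite inE; apply/andP; split; first exact: connect0.
by apply/existsP; exists t; rewrite t_tau; exact: bfs_tree_reach (reach_tau t_tau).
Qed.

Lemma tau_sub_pruned : tau \subset pruned_vertices.
Proof.
apply/fsubsetP => t t_tau; rewrite inE reach_tau //=.
by apply/existsP; exists t; rewrite t_tau; apply: connect0.
Qed.

Lemma pruned_edgeP e : e \in pruned_tree.2 ->
  [/\ e \in bfs_edges, e.1 \in pruned_vertices & e.2 \in pruned_vertices].
Proof.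
rewrite inE => /andP[bfs_e e2_pruned]; split=> //.
have [_ reach_e1 _ _] := bfs_edgeP bfs_e.
move: e2_pruned; rewrite !inE reach_e1 => /andP[_ /existsP[t /andP[t_tau reach_t]]].
apply/existsP; exists t; rewrite t_tau; apply: connect_trans reach_t.
by apply: connect1; rewrite /edgeS -surjective_pairing.
Qed.

Lemma pruned_tree_sub : pruned_tree.2 \subset S.2.
Proof. by apply/fsubsetP => e /pruned_edgeP[/bfs_edgeP[]]. Qed.

Lemma pruned_parent v : v \in pruned_vertices -> v != s ->
  exists u, (u, v) \in pruned_tree.2.
Proof.
move=> v_pruned v_neq_s; move: (v_pruned); rewrite inE => /andP[reach_v _].
by have [u uv] := bfs_parent_edge reach_v v_neq_s; exists u; rewrite inE uv.
Qed.

Lemma pruned_tree_reach : {in pruned_vertices, forall v, reach pruned_tree s v}.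
Proof.
apply: reach_by_bfs_dist => v v_pruned v_neq_s.
have [u uv] := pruned_parent v_pruned v_neq_s.
have [/bfs_edgeP[_ _ _ lt_uv] /= u_pruned _] := pruned_edgeP uv.
by exists u => //; rewrite u_pruned.
Qed.

Lemma pruned_tree_uconnected : uconnected pruned_tree.
Proof.
have sym : symmetric (uedge pruned_tree) by move=> a b; rewrite /uedge orbC.
have from_root v : v \in pruned_vertices -> connect (uedge pruned_tree) s v.
  move=> /pruned_tree_reach; apply: connect_sub => a b ab.
  by apply: connect1; apply/orP; left.
move=> x y /from_root s_x /from_root s_y.
by apply: connect_trans s_y; rewrite (sym_connect_sym sym).
Qed.

Lemma pruned_tree_uacyclic : uacyclic pruned_tree.
Proof.
apply: (@uacyclic_potential _ _ bfs_dist) => [e /pruned_edgeP[/bfs_edgeP[]] //|].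
by move=> u u' v /pruned_edgeP[uv _ _] /pruned_edgeP[u'v _ _]; apply: bfs_edges_head uv u'v.
Qed.

Lemma pruned_tree_leaf v : v \in pruned_vertices -> v != s ->
  outdeg pruned_tree v = 0%N -> v \in tau.
Proof.
rewrite inE => /andP[_ /existsP[t /andP[t_tau reach_t]]] _ no_out.
have [->//|v_neq_t] := eqVneq v t.
case/connectP: reach_t => -[|u q] /=; first by move=> _ t_v; rewrite t_v eqxx in v_neq_t.
case/andP=> vu uq t_q; have {}vu : (v, u) \in bfs_edges := vu.
have [_ _ reach_u _] := bfs_edgeP vu.
have u_pruned : u \in pruned_vertices.
  by rewrite inE reach_u; apply/existsP; exists t; rewrite t_tau; apply/connectP; exists q.
move/eqP: no_out; rewrite cards_eq0 => /eqP no_out.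
suff : (v, u) \in [set e in pruned_tree.2 | e.1 == v] by rewrite no_out inE.
by rewrite inE /= eqxx andbT inE vu.
Qed.

Lemma pruned_indeg_root : indeg pruned_tree s = 0%N.
Proof.
apply/eqP; rewrite cards_eq0; apply/eqP/setP => e; rewrite inE finset.in_set0.
apply/negP => /andP[/pruned_edgeP[bfs_e _ _] /eqP e_s].
by move: bfs_e; rewrite inE e_s eqxx.
Qed.

Lemma pruned_indeg v : v \in pruned_vertices -> v != s -> indeg pruned_tree v = 1%N.
Proof.
move=> v_pruned v_neq_s; have [u uv] := pruned_parent v_pruned v_neq_s.
apply/eqP/cards1P; exists (u, v); apply/setP => e; rewrite inE finset.in_set1.
apply/andP/eqP => [[e_pruned /eqP e_v]|->]; last by rewrite uv.
have [bfs_e _ _] := pruned_edgeP e_pruned; have [bfs_uv _ _] := pruned_edgeP uv.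
by move: bfs_e; rewrite [e]surjective_pairing e_v => /bfs_edges_head/(_ bfs_uv) ->.
Qed.

Lemma pruned_tree_steiner (E : {set V * V}) :
  is_subgraph E S -> steiner_tree E s tau pruned_tree.
Proof.
case/andP=> S_E _; split; split.
- apply/andP; split; first exact: fintype.subset_trans pruned_tree_sub S_E.
  by apply/forall_inP => e /pruned_edgeP[_ -> ->].
- exact: root_pruned.
- exact: pruned_tree_uconnected.
- exact: pruned_tree_uacyclic.
- exact: pruned_indeg_root.
- exact: pruned_indeg.
- exact: tau_sub_pruned.
- exact: pruned_tree_leaf.
Qed.

End PrunedShortestPathTree.

Lemma cost_subgraph (R : realType) (V : finType) (w : V * V -> R) (S T : subg V) :
  {in S.2, forall e, 0 <= w e} -> T.2 \subset S.2 -> cost w T <= cost w S.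
Proof.
move=> w_ge0 TS; rewrite /cost [leRHS](big_setID T.2) /= (finset.setIidPr TS) lerDl.
by apply: sumr_ge0 => e /finset.setDP[eS _]; apply: w_ge0.
Qed.

Lemma exists_argmax (d : Order.disp_t) (R : orderType d) (T : finType)
    (P : T -> Prop) (f : T -> R) :
  (exists x, P x) -> exists2 x, P x & forall y, P y -> (f y <= f x)%O.
Proof.
case=> x Px; case: (@arg_maxP _ _ _ x (fun y => `[< P y >]) f (asboolT Px)).
by move=> y /asboolP Py y_max; exists y => // z /asboolT/y_max.
Qed.

Lemma sup_image_attained (R : realType) (T : Type) (P : set T) (f : T -> R) x :
  P x -> (forall y, P y -> f y <= f x) -> sup (f @` P) = f x.
Proof.
move=> Px x_max; apply/le_anti/andP; split.
  by apply: ge_sup => [|_ [y Py <-]]; [exists (f x), x | exact: x_max].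
by apply: ub_le_sup; [exists (f x) => _ [y Py <-]; exact: x_max | exists x].
Qed.

Section SteinerTreesSuffice.
Variables (R : realType) (V : finType) (E : {set V * V}) (w : V * V -> R).
Variables (s : V) (tau : {set V}) (b : R).
Hypothesis w_ge0 : forall e, e \in E -> 0 <= w e.

Lemma steiner_tree_feasible T :
  steiner_tree E s tau T -> cost w T <= b -> feasible E w s tau b T.
Proof.
move=> steiner_T cost_T; have [[sub_T s_T _ _] [_ _ tau_T _]] := steiner_T.
split=> // t /(fsubsetP tau_T) t_T; exact: steiner_tree_reach steiner_T t t_T.
Qed.

Lemma feasible_steiner_subtree S : (exists t, t \in tau) -> feasible E w s tau b S ->
  exists2 T, steiner_tree E s tau T /\ cost w T <= b & CD w tau s S <= CD w tau s T.
Proof.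
move=> tau_neq0 [sub_S _ _ reach_S cost_S].
have w_ge0_S : {in S.2, forall e, 0 <= w e}.
  by case/andP: sub_S => S_E _ e /(fsubsetP S_E); apply: w_ge0.
have T_S := pruned_tree_sub S s tau.
exists (pruned_tree S s tau); first split.
- exact: pruned_tree_steiner.
- exact: le_trans (cost_subgraph w_ge0_S T_S) cost_S.
apply: CD_subgraph w_ge0_S T_S tau_neq0 _ => t /(fsubsetP (tau_sub_pruned reach_S)).
exact: pruned_tree_reach.
Qed.

End SteinerTreesSuffice.

Theorem theorem1 (R : realType) (V : finType) (E : {set V * V}) (w : V * V -> R)
    (s : V) (tau : {set V}) (b : R) :
  (forall e, e \in E -> 0 <= w e) ->
  s \notin tau -> (1 < #|tau|)%N -> 0 <= b ->
  (exists S : subg V, feasible E w s tau b S) ->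
  sup [set CD w tau s S | S in [set S : subg V | feasible E w s tau b S]]
    = sup [set CD w tau s S |
           S in [set S : subg V | steiner_tree E s tau S /\ cost w S <= b]]
  /\ exists Sstar : subg V,
       [/\ steiner_tree E s tau Sstar, cost w Sstar <= b &
           CD w tau s Sstar
             = sup [set CD w tau s S | S in [set S : subg V | feasible E w s tau b S]]].
Proof.
move=> w_ge0 _ tau_gt1 _ feasible_ex.
have tau_neq0 : exists t, t \in tau by apply/card_gt0P; apply: ltnW.
have [S0 feas_S0 S0_max] := exists_argmax (CD w tau s) feasible_ex.
have [T [steiner_T cost_T] CD_T] := feasible_steiner_subtree w_ge0 tau_neq0 feas_S0.
have feas_T := steiner_tree_feasible steiner_T cost_T.
have CD_TE : CD w tau s T = CD w tau s S0 by apply/le_anti; rewrite CD_T S0_max.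
have -> := sup_image_attained (P := [set S | feasible E w s tau b S]) feas_S0 S0_max.
have -> : sup [set CD w tau s S | S in [set S | steiner_tree E s tau S /\ cost w S <= b]]
    = CD w tau s T.
  apply: sup_image_attained => [//|S [steiner_S cost_S]]; rewrite CD_TE.
  exact/S0_max/steiner_tree_feasible.
by split; [|exists T].
Qed.
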